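(* Let $s\ge 2$ and let $a,b\ge 1$ be integers with $a+b\le s$. Let $C$ be a set with $|C|\ge s+1$ and let $z_1,z_2$ be two distinct elements not in $C$. Let \[ \mathcal{C}=\{\{z_1\}\cup D: D\subseteq C,\ |D|=a\}\cup\{\{z_2\}\cup E: E\subseteq C,\ |E|=b\}. \] Then $\mathcal{C}$ is non-separable.
   Context: Two families $\mathcal{A}_1,\mathcal{A}_2$ are cross-intersecting if $A_1\cap A_2\neq\emptyset$ for all $A_1\in\mathcal{A}_1$, $A_2\in\mathcal{A}_2$. A family $\mathcal{A}$ is non-separable if for every partition $\mathcal{A}=\mathcal{A}_1\cup\mathcal{A}_2$ (disjoint union) with $(\mathcal{A}_1,\mathcal{A}_2)$ cross-intersecting, we have $\mathcal{A}_1=\emptyset$ or $\mathcal{A}_2=\emptyset$. *)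

From mathcomp Require Import all_boot.
Set Implicit Arguments. Unset Strict Implicit. Unset Printing Implicit Defensive.

Definition cross_intersecting (T : finType) (A1 A2 : {set {set T}}) : Prop :=
  forall X Y, X \in A1 -> Y \in A2 -> X :&: Y != set0.

Definition non_separable (T : finType) (A : {set {set T}}) : Prop :=
  forall A1 A2 : {set {set T}},
    A1 :&: A2 = set0 -> A1 :|: A2 = A -> cross_intersecting A1 A2 ->
    A1 = set0 \/ A2 = set0.

Definition fam_C (T : finType) (C : {set T}) (z1 z2 : T) (a b : nat)
  : {set {set T}} :=
  [set z1 |: D | D in powerset C & #|D| == a] :|:
  [set z2 |: E | E in powerset C & #|E| == b].

From mathcomp Require Import all_boot.
From mathcomp Require Import zify.

Set Implicit Arguments. Unset Strict Implicit. Unset Printing Implicit Defensive.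

(* A partition of a family into two cross-intersecting parts cannot separate
   two disjoint members, so membership in the first part is constant along
   chains of pairwise disjoint members.  In the family at hand any two
   [z1 |: D] are linked: if [D'] arises from [D] by exchanging one element,
   then [D :|: D'] has [a + 1] elements, so some [b]-subset [E] of [C] avoids
   both and [z1 |: D], [z2 |: E], [z1 |: D'] is such a chain; every
   [z2 |: E] is in turn disjoint from some [z1 |: D]. *)

Definition disjointness (T : finType) (A : {set {set T}}) : rel {set T} :=
  fun X Y => [&& X \in A, Y \in A & X :&: Y == set0].

Section CrossPartition.

Variables (T : finType) (A A1 A2 : {set {set T}}).
Hypotheses (A12_0 : A1 :&: A2 = set0) (A12_U : A1 :|: A2 = A)
  (cross12 : cross_intersecting A1 A2).

Lemma mem_partition2 Z : Z \in A -> (Z \in A2) = (Z \notin A1).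
Proof.
move=> ZA; apply/idP/idP => [Z2 | /negPf Z1].
  apply/negP => Z1; have : Z \in A1 :&: A2 by rewrite inE Z1 Z2.
  by rewrite A12_0 inE.
by move: ZA; rewrite -A12_U inE Z1.
Qed.

Lemma cross_partition_closed : closed (disjointness A) (mem A1).
Proof.
move=> X Y /and3P [XA YA /eqP XY0] /=.
case X1: (X \in A1); case Y1: (Y \in A1) => //.
- have Y2 : Y \in A2 by rewrite mem_partition2 ?Y1.
  by have := cross12 X1 Y2; rewrite XY0 eqxx.
- have X2 : X \in A2 by rewrite mem_partition2 ?X1.
  by have := cross12 Y1 X2; rewrite setIC XY0 eqxx.
Qed.

End CrossPartition.

Lemma non_separable_connect (T : finType) (A : {set {set T}}) (X0 : {set T}) :
  (forall X, X \in A -> connect (disjointness A) X0 X) -> non_separable A.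
Proof.
move=> connA A1 A2 A12_0 A12_U cross12.
have closedA1 := cross_partition_closed A12_0 A12_U cross12.
have [-> | [X X1]] := set_0Vmem A1; first by left.
have [-> | [Y Y2]] := set_0Vmem A2; first by right.
have sameA1 Z : Z \in A -> (Z \in A1) = (X0 \in A1).
  by move=> ZA; rewrite (closed_connect closedA1 (connA Z ZA)).
have XA : X \in A by rewrite -A12_U inE X1.
have YA : Y \in A by rewrite -A12_U inE Y2 orbT.
move: Y2; rewrite (mem_partition2 A12_0 A12_U YA).
by rewrite sameA1 // -(sameA1 X XA) X1.
Qed.

Lemma exists_subset_card (T : finType) (S : {set T}) n :
  n <= #|S| -> exists2 D : {set T}, D \subset S & #|D| = n.
Proof.
elim: n => [|n IH] nS; first by exists set0; rewrite ?sub0set ?cards0.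
have [D DS cardD] := IH (ltnW nS).
have : 0 < #|S :\: D| by rewrite cardsD (setIidPr DS) cardD; lia.
case/card_gt0P => x; rewrite inE => /andP [xD xS].
exists (x |: D); first by rewrite subUset sub1set xS DS.
by rewrite cardsU1 xD cardD.
Qed.

Lemma exists_subset_card_disjoint (T : finType) (C S : {set T}) n :
  n + #|S| <= #|C| ->
  exists2 D : {set T}, D \subset C :\: S & #|D| = n.
Proof.
move=> nSC; apply: exists_subset_card.
by rewrite cardsD; have := subset_leq_card (subsetIr C S); lia.
Qed.

Lemma proper_exchange_setD (T : finType) (D D' : {set T}) x y :
  x \in D :\: D' -> y \in D' -> (y |: D :\ x) :\: D' \proper D :\: D'.
Proof.
move=> xDD' yD'; apply: sub_proper_trans (properD1 xDD').
apply/subsetP => w; rewrite !inE => /andP [wD' /orP [/eqP wy | /andP [-> ->]]].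
  by rewrite wy yD' in wD'.
by rewrite wD'.
Qed.

Section DisjointnessChains.

Variables (T : finType) (C : {set T}) (z1 z2 : T) (a b : nat).
Hypotheses (z12 : z1 != z2) (z1C : z1 \notin C) (z2C : z2 \notin C).

Local Notation F := (fam_C C z1 z2 a b).
Local Notation linked := (connect (disjointness F)).

Lemma mem_fam1 (D : {set T}) : D \subset C -> #|D| = a -> z1 |: D \in F.
Proof.
move=> DC cardD; rewrite inE; apply/orP; left.
by apply/imsetP; exists D; rewrite // inE powersetE DC cardD eqxx.
Qed.

Lemma mem_fam2 (E : {set T}) : E \subset C -> #|E| = b -> z2 |: E \in F.
Proof.
move=> EC cardE; rewrite inE; apply/orP; right.
by apply/imsetP; exists E; rewrite // inE powersetE EC cardE eqxx.
Qed.

Lemma setI_fam12_eq0 (D E : {set T}) :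
  D \subset C -> E \subset C :\: D -> (z1 |: D) :&: (z2 |: E) = set0.
Proof.
move=> DC /subsetP ECD; apply/setP => w; rewrite !inE.
apply/negP => /andP [/orP [/eqP-> | wD] /orP [/eqP w2 | /ECD]].
- by move: z12; rewrite w2 eqxx.
- by rewrite !inE (negPf z1C) andbF.
- by move: z2C; rewrite -w2 (subsetP DC w wD).
- by rewrite !inE wD.
Qed.

Lemma linked_fam12 (D E : {set T}) :
  D \subset C -> #|D| = a -> E \subset C :\: D -> #|E| = b ->
  linked (z1 |: D) (z2 |: E) /\ linked (z2 |: E) (z1 |: D).
Proof.
move=> DC cardD ECD cardE.
have EC : E \subset C := subset_trans ECD (subsetDl C D).
have DE0 := setI_fam12_eq0 DC ECD.
split; apply: connect1;
  rewrite /disjointness (mem_fam1 DC cardD) (mem_fam2 EC cardE) /=.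
  by rewrite DE0.
by rewrite setIC DE0.
Qed.

Lemma linked_fam1_via_fam2 (D D' : {set T}) :
  D \subset C -> #|D| = a -> D' \subset C -> #|D'| = a ->
  b + #|D :|: D'| <= #|C| -> linked (z1 |: D) (z1 |: D').
Proof.
move=> DC cardD D'C cardD' room.
have [E ECDD' cardE] := exists_subset_card_disjoint room.
have [ECD ECD'] : E \subset C :\: D /\ E \subset C :\: D'.
  by split; apply: subset_trans ECDD' _; rewrite setDS // (subsetUl, subsetUr).
apply: connect_trans (linked_fam12 DC cardD ECD cardE).1 _.
exact: (linked_fam12 D'C cardD' ECD' cardE).2.
Qed.

Hypothesis abC : a + b < #|C|.

Lemma linked_fam1 (D D' : {set T}) :
  D \subset C -> #|D| = a -> D' \subset C -> #|D'| = a ->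
  linked (z1 |: D) (z1 |: D').
Proof.
move=> + + D'C cardD'; have [n] := ubnP #|D :\: D'|.
elim: n D => // n IH D ltDn DC cardD.
have [-> | neDD'] := eqVneq D D'; first exact: connect0.
have [x xDD'] : exists x, x \in D :\: D'.
  apply/set0Pn; rewrite setD_eq0; apply: contra neDD' => DD'.
  by rewrite eqEcard DD' cardD cardD' /=.
have [y yD'D] : exists y, y \in D' :\: D.
  apply/set0Pn; rewrite -card_gt0 cardsD setIC cardD' -cardD -cardsD.
  by rewrite card_gt0; apply/set0Pn; exists x.
move: (yD'D) (xDD'); rewrite !inE => /andP [yD yD'] /andP [_ xD].
set D'' := y |: D :\ x.
have D''C : D'' \subset C.
  rewrite subUset sub1set (subsetP D'C y yD') /=.
  exact: subset_trans (subsetDl _ _) DC.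
have cardD'' : #|D''| = a.
  by rewrite cardsU1 !inE (negPf yD) andbF -cardD (cardsD1 x D) xD.
have room : b + #|D :|: D''| <= #|C|.
  have : D :|: D'' \subset y |: D.
    by rewrite subUset subsetUr setUS // subsetDl.
  by move/subset_leq_card; rewrite cardsU1 yD cardD; lia.
apply: connect_trans (linked_fam1_via_fam2 DC cardD D''C cardD'' room) _.
apply: IH D''C cardD''.
have := proper_card (proper_exchange_setD xDD' yD'); rewrite -/D''; lia.
Qed.

Lemma linked_fam2 (D E : {set T}) :
  D \subset C -> #|D| = a -> E \subset C -> #|E| = b ->
  linked (z1 |: D) (z2 |: E).
Proof.
move=> DC cardD EC cardE.
have [D' D'CE cardD'] : exists2 D' : {set T}, D' \subset C :\: E & #|D'| = a.
  by apply: exists_subset_card_disjoint; lia.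
have D'C : D' \subset C := subset_trans D'CE (subsetDl C E).
apply: connect_trans (linked_fam1 DC cardD D'C cardD') _.
apply: (linked_fam12 D'C cardD' _ cardE).1.
by move: D'CE; rewrite !subsetD EC D'C disjoint_sym.
Qed.

End DisjointnessChains.

Theorem proposition3p2 (T : finType) (s a b : nat) (C : {set T}) (z1 z2 : T) :
  2 <= s -> 1 <= a -> 1 <= b -> a + b <= s ->
  s.+1 <= #|C| ->
  z1 != z2 -> z1 \notin C -> z2 \notin C ->
  non_separable (fam_C C z1 z2 a b).
Proof.
move=> _ _ _ abs sC z12 z1C z2C.
have abC : a + b < #|C| by lia.
have [D0 D0C cardD0] : exists2 D0 : {set T}, D0 \subset C & #|D0| = a.
  by apply: exists_subset_card; lia.
apply: (@non_separable_connect _ _ (z1 |: D0)) => X.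
rewrite inE => /orP [] /imsetP [D]; rewrite inE powersetE => /andP [DC /eqP cardD] ->.
- exact: linked_fam1.
- exact: linked_fam2.
Qed.
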